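(* Let $q$ be an odd positive integer, let $\omega_q = e^{\mathrm{i}2\pi/q}$, and let $m < q$ be a positive integer. Let $\mathbf{V}$ be the $m\times m$ Vandermonde matrix with $\mathbf{V}(i,j) = s_j^{\,i}$ for $i,j\in\{0,\dots,m-1\}$, where $s_0,\dots,s_{m-1}$ are distinct elements of $\{1,\omega_q,\omega_q^2,\dots,\omega_q^{q-1}\}$. Then, with $c_1 = 5.5$, $$\kappa(\mathbf{V}) \le O\!\left(q^{\,q-m+c_1}\right),$$ i.e. there is an absolute constant $C$ (independent of $q$, $m$ and the choice of the $s_j$) such that $\kappa(\mathbf{V}) \le C\, q^{\,q-m+5.5}$.
   Context: For a square matrix $\mathbf{M}$, $\|\mathbf{M}\|$ denotes its largest singular value and the condition number is $\kappa(\mathbf{M}) = \|\mathbf{M}\|\,\|\mathbf{M}^{-1}\|$ (infinite if $\mathbf{M}$ is singular). $\mathrm{i}=\sqrt{-1}$. *)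

From HB Require Import structures.
From mathcomp Require Import all_boot all_order all_algebra.
From mathcomp Require Import all_classical all_reals.
From mathcomp Require Import trigo exp.
From mathcomp Require Import complex.
Set Implicit Arguments. Unset Strict Implicit. Unset Printing Implicit Defensive.
Import Order.TTheory GRing.Theory Num.Theory.
Local Open Scope ring_scope.
Local Open Scope complex_scope.

Section Defs.
Variable R : realType.

Definition omega (q : nat) : R[i] :=
  (cos (2 * pi / q%:R)) +i* (sin (2 * pi / q%:R)).

Definition adjmx (m n : nat) (M : 'M[R[i]]_(m, n)) : 'M[R[i]]_(n, m) :=
  (map_mx (@conjc R) M)^T.

(* largest singular value: square root of the largest eigenvalue of M^* M
   (these eigenvalues are real and nonnegative) *)
Definition sigma_max (n : nat) (M : 'M[R[i]]_n) : R :=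
  Num.sqrt (sup [set x : R | eigenvalue (adjmx M *m M) (x%:C)]).

Definition cond_number (n : nat) (M : 'M[R[i]]_n) : \bar R :=
  if M \in unitmx then (sigma_max M * sigma_max (invmx M))%:E else +oo%E.

Definition vandermonde (m : nat) (s : 'I_m -> R[i]) : 'M[R[i]]_m :=
  \matrix_(i < m, j < m) (s j) ^+ i.
End Defs.

From HB Require Import structures.
From mathcomp Require Import all_boot all_order all_algebra.
From mathcomp Require Import all_classical all_reals.
From mathcomp Require Import trigo exp.
From mathcomp Require Import complex.
From mathcomp Require Import ring zify lra.

(* Row j of the inverse Vandermonde matrix holds the coefficients of the Lagrange
   polynomial prod_(k <> j) (X - s_k) / prod_(k <> j) (s_j - s_k).  As the s_k are
   q-th roots of unity, the numerator times a monic cofactor with q - m unimodular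
   roots is (X^q - 1) / (X - s_j), whose coefficients are unimodular.  Dividing
   these unimodular linear factors out one at a time bounds the coefficients of the
   numerator by binomials C(i + q - m, q - m), and evaluating at s_j bounds the
   denominator from below by q / 2^(q - m); since C(n, r) 2^r <= 2 n^r, every entry
   of V^-1 is at most 2 q^(q - m).  All entries of V are unimodular, and the largest
   singular value of an n x n matrix is at most n times its largest entry, so
   kappa(V) <= 2 q^(q - m + 2). *)

Set Implicit Arguments. Unset Strict Implicit. Unset Printing Implicit Defensive.
Import Order.TTheory GRing.Theory Num.Theory.
Local Open Scope ring_scope.

Lemma bin_hockey_stick i k :
  (\sum_(l < i.+1) 'C(l + k, k) = 'C(i + k.+1, k.+1))%N.
Proof.
elim: i => [|i IH]; first by rewrite big_ord1 !add0n !binn.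
by rewrite big_ord_recr /= IH [in RHS]addSn binS addSnnS.
Qed.

Lemma leq_exp2_fact r : (2 ^ r <= 2 * r`!)%N.
Proof.
elim: r => [|[|r] IH] //; rewrite expnS factS.
by rewrite mulnCA leq_mul.
Qed.

Lemma leq_ffact_exp n r : (n ^_ r <= n ^ r)%N.
Proof.
elim: r n => [|r IH] [|n] //; rewrite ffactnS expnS leq_mul2l /=.
apply: leq_trans (IH n) _.
by case: r {IH} => // r; rewrite leq_exp2r.
Qed.

Lemma leq_bin_exp2 n r : ('C(n, r) * 2 ^ r <= 2 * n ^ r)%N.
Proof.
apply: leq_trans (leq_mul (leqnn _) (leq_exp2_fact r)) _.
by rewrite mulnCA bin_ffact leq_mul2l leq_ffact_exp orbT.
Qed.

Section UnitRootDivision.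
Variable F : numFieldType.

(* Comparing coefficients in [G = Q * ('X - z)]: [Q_(i+1) = z^-1 (Q_i - G_(i+1))]. *)
Lemma norm_coef_divXsubC_le (Q : {poly F}) (z : F) i : `|z| = 1 ->
  `|Q`_i| <= \sum_(l < i.+1) `|(Q * ('X - z%:P))`_l|.
Proof.
move=> z1; have z_neq0 : z != 0 by rewrite -normr_eq0 z1 oner_neq0.
elim: i => [|i IH].
  by rewrite big_ord1 mulrBr coefB coefMX coefMC sub0r normrN normrM z1 mulr1.
have -> : Q`_i.+1 = z^-1 * (Q`_i - (Q * ('X - z%:P))`_i.+1).
  by rewrite [Q * _]mulrBr coefB coefMX coefMC /= opprB addrC subrK mulrC mulfK.
rewrite big_ord_recr normrM normfV z1 invr1 mul1r.
exact: le_trans (ler_normB _ _) (lerD IH _).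
Qed.

Lemma norm_coef_div_prod_XsubC_le (zs : seq F) (N : {poly F}) k :
  {in zs, forall z, `|z| = 1} ->
  (forall l, `|(N * \prod_(z <- zs) ('X - z%:P))`_l| <= 'C(l + k, k)%:R) ->
  forall i, `|N`_i| <= 'C(i + (k + size zs), k + size zs)%:R.
Proof.
elim: zs N k => [|z zs IH] N k zs1 NPb i.
  by move: (NPb i); rewrite big_nil mulr1 addn0.
rewrite /= addnS -addSn; apply: IH => [y y_zs|l].
  by apply: zs1; rewrite inE y_zs orbT.
apply: le_trans (norm_coef_divXsubC_le _ l (zs1 z (mem_head _ _))) _.
rewrite -bin_hockey_stick natr_sum; apply: ler_sum => j _.
by have := NPb j; rewrite big_cons mulrCA mulrC.
Qed.

Lemma norm_prod_subr_le (x : F) (zs : seq F) : `|x| = 1 ->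
  {in zs, forall z, `|z| = 1} -> `|\prod_(z <- zs) (x - z)| <= 2 ^+ size zs.
Proof.
move=> x1; elim: zs => [|z zs IH] zs1; first by rewrite big_nil normr1.
rewrite big_cons normrM exprS ler_pM //.
  by apply: le_trans (ler_normB _ _) _; rewrite x1 zs1 ?mem_head.
by apply: IH => y y_zs; apply: zs1; rewrite inE y_zs orbT.
Qed.

End UnitRootDivision.

Lemma norm_unity_root (R : numDomainType) n (z : R) :
  z ^+ n = 1 -> (0 < n)%N -> `|z| = 1.
Proof.
by move=> zn1 n_gt0; apply/eqP; rewrite -(pexpr_eq1 n_gt0) // -normrX zn1 normr1.
Qed.

Section UnityQuotient.
Variables (F : fieldType) (q : nat) (c : F).

Definition unity_quot : {poly F} := \poly_(l < q) c ^+ (q.-1 - l).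

Lemma mul_unity_quot : c ^+ q = 1 -> unity_quot * ('X - c%:P) = 'X^q - 1.
Proof.
move=> cq1; have -> : 'X^q - 1 = 'X^q - c%:P ^+ q by rewrite -rmorphXn /= cq1.
rewrite subrXX mulrC; congr (_ * _).
rewrite /unity_quot poly_def (reindex_inj rev_ord_inj) /=.
apply: eq_bigr => i _; have := ltn_ord i.
rewrite -rmorphXn /= mulrC mul_polyC subnS => ?; congr (c ^+ _ *: 'X^_); lia.
Qed.

Lemma size_unity_quot : size unity_quot = q.
Proof. by rewrite size_poly_eq // subnn oner_neq0. Qed.

Hypothesis q_gt0 : (0 < q)%N.

Lemma unity_quot_monic : unity_quot \is monic.
Proof. by rewrite monicE lead_coef_poly ?subnn ?expr0 ?oner_neq0. Qed.

Lemma horner_unity_quot : unity_quot.[c] = q%:R * c ^+ q.-1.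
Proof.
rewrite horner_poly (eq_bigr (fun=> c ^+ q.-1)) ?sumr_const ?card_ord ?mulr_natl //.
by move=> l _; rewrite -exprD subnK // -ltnS prednK.
Qed.

End UnityQuotient.

Section LagrangeBasis.
Variables (F : fieldType) (m : nat) (s : 'I_m -> F).

Definition lagrange_num j : {poly F} := \prod_(k | k != j) ('X - (s k)%:P).

Definition lagrange_den j : F := \prod_(k | k != j) (s j - s k).

Definition vandermonde_inv : 'M[F]_m :=
  \matrix_(j, i) ((lagrange_den j)^-1 * (lagrange_num j)`_i).

Lemma size_lagrange_num j : size (lagrange_num j) = m.
Proof.
rewrite size_prod => [|k _]; last by rewrite polyXsubC_eq0.
rewrite (eq_bigr (fun=> 2%N)) => [|k _]; last by rewrite size_XsubC.
by rewrite sum_nat_const cardC1 card_ord; have := ltn_ord j; lia.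
Qed.

Lemma lagrange_num_monic j : lagrange_num j \is monic.
Proof. exact: monic_prod_XsubC. Qed.

Lemma horner_lagrange_num j k :
  (lagrange_num j).[s k] = (j == k)%:R * lagrange_den j.
Proof.
rewrite horner_prod (eq_bigr (fun l => s k - s l)) => [|l _]; last first.
  by rewrite hornerXsubC.
have [<-|jk] := eqVneq; first by rewrite mul1r.
by rewrite (bigD1 k) 1?eq_sym //= subrr !mul0r.
Qed.

Hypothesis s_inj : injective s.

Lemma lagrange_den_neq0 j : lagrange_den j != 0.
Proof. by apply/prodf_neq0 => k kj; rewrite subr_eq0 (inj_eq s_inj) eq_sym. Qed.

Lemma mul_vandermonde_inv :
  vandermonde_inv *m \matrix_(i < m, j < m) s j ^+ i = 1%:M.
Proof.
apply/matrixP => j k; rewrite !mxE.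
set d := (lagrange_den j)^-1.
rewrite (eq_bigr (fun i : 'I_m => d * ((lagrange_num j)`_i * s k ^+ i))).
  rewrite -mulr_sumr -horner_coef_wide ?size_lagrange_num //.
  by rewrite horner_lagrange_num mulrCA mulVf ?lagrange_den_neq0 ?mulr1.
by move=> i _; rewrite !mxE mulrA.
Qed.

End LagrangeBasis.

Arguments lagrange_num {F m} s j.
Arguments lagrange_den {F m} s j.
Arguments vandermonde_inv {F m} s.

Section LagrangeCofactor.
Variables (C : numClosedFieldType) (q m : nat) (s : 'I_m -> C).
Hypotheses (q_gt0 : (0 < q)%N) (s_inj : injective s).
Hypothesis s_unity : forall k, s k ^+ q = 1.

Let norm_s k : `|s k| = 1 := norm_unity_root (s_unity k) q_gt0.

Lemma lagrange_num_cofactor j : exists zs : seq C,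
  [/\ (size zs + m)%N = q, {in zs, forall z, `|z| = 1} &
      lagrange_num s j * \prod_(z <- zs) ('X - z%:P) = unity_quot q (s j)].
Proof.
set rs := [seq s k | k <- enum 'I_m].
have [Q eQ] : exists Q, 'X^q - 1 = Q * \prod_(z <- rs) ('X - z%:P).
  apply: uniq_roots_prod_XsubC; last by rewrite uniq_rootsE map_inj_uniq ?enum_uniq.
  by apply/allP => _ /mapP[k _ ->]; rewrite /root !hornerE s_unity subrr.
have eA : unity_quot q (s j) = Q * lagrange_num s j.
  apply: (@mulIf _ ('X - (s j)%:P)); first by rewrite polyXsubC_eq0.
  rewrite mul_unity_quot // eQ big_map big_enum (bigD1 j) //=.
  by rewrite mulrA mulrAC.
have Q_monic : Q \is monic.
  by have := unity_quot_monic (s j) q_gt0; rewrite eA monicMr ?lagrange_num_monic.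
have [zs eQz] := closed_field_poly_normal Q.
rewrite (monicP Q_monic) scale1r in eQz.
exists zs; split.
- have := size_unity_quot q (s j).
  rewrite eA eQz size_mul ?monic_neq0 ?monic_prod_XsubC ?lagrange_num_monic //.
  by rewrite size_prod_XsubC size_lagrange_num addSn => /= ->.
- move=> z z_zs; apply: norm_unity_root _ q_gt0.
  have /rootP Qz : root Q z by rewrite eQz root_prod_XsubC.
  have := congr1 (horner^~ z) eQ; rewrite hornerM Qz mul0r !hornerE.
  by move/eqP; rewrite subr_eq0 => /eqP.
- by rewrite eA eQz mulrC.
Qed.

Lemma norm_coef_lagrange_num_le j i :
  `|(lagrange_num s j)`_i| <= 'C(i + (q - m), q - m)%:R.
Proof.
have [zs [<- zs1 eN]] := lagrange_num_cofactor j.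
rewrite addnK -[size zs]add0n; apply: norm_coef_div_prod_XsubC_le => // l.
rewrite eN coef_poly bin0; case: ifP => _; last by rewrite normr0.
by rewrite normrX norm_s expr1n.
Qed.

(* At [s j] the right side of the cofactor identity has modulus [q], while the
   cofactor has modulus at most [2 ^ (q - m)]. *)
Lemma norm_lagrange_den_ge j : q%:R <= 2 ^+ (q - m) * `|lagrange_den s j|.
Proof.
have [zs [size_zs zs1 eN]] := lagrange_num_cofactor j.
have := congr1 (horner^~ (s j)) eN.
rewrite hornerM horner_lagrange_num eqxx mul1r horner_unity_quot // => e.
have -> : q%:R = `|q%:R * s j ^+ q.-1|.
  by rewrite normrM normr_nat normrX norm_s expr1n mulr1.
rewrite -e normrM mulrC -size_zs addnK ler_wpM2r //.
rewrite horner_prod (eq_bigr (fun z => s j - z)) => [|z _].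
  exact: norm_prod_subr_le.
by rewrite hornerXsubC.
Qed.

Lemma norm_vandermonde_inv_le j i :
  `|vandermonde_inv s j i| <= 2 * q%:R ^+ (q - m).
Proof.
have m_le_q : (m <= q)%N.
  by have [zs [<- _ _]] := lagrange_num_cofactor j; rewrite leq_addl.
have inv_den_le : `|lagrange_den s j|^-1 <= 2 ^+ (q - m).
  have den_gt0 : 0 < `|lagrange_den s j| by rewrite normr_gt0 lagrange_den_neq0.
  rewrite -div1r ler_pdivrMr //; apply: le_trans (norm_lagrange_den_ge j).
  by rewrite ler1n.
rewrite mxE normrM normfV.
apply: le_trans (ler_pM _ _ inv_den_le (norm_coef_lagrange_num_le j i)) _.
- by rewrite invr_ge0.
- by [].
rewrite -!natrX -!natrM ler_nat mulnC.
apply: leq_trans (leq_bin_exp2 _ _) _; rewrite leq_mul2l /=.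
have : (i + (q - m) <= q)%N by have := ltn_ord i; lia.
by case: (q - m)%N => // r; rewrite leq_exp2r.
Qed.

End LagrangeCofactor.

(* Test [v *m G = a *: v] against the l1-norm of [v]. *)
Lemma eigenvalue_norm_le (F : numFieldType) n (G : 'M[F]_n) c a :
  (forall i j, `|G i j| <= c) -> eigenvalue G a -> `|a| <= n%:R * c.
Proof.
move=> Gc /eigenvalueP[v vG v_neq0].
set l1 := \sum_(k < n) `|v 0 k|.
have l1_gt0 : 0 < l1.
  rewrite lt_def sumr_ge0 ?andbT //; apply: contraNneq v_neq0 => /psumr_eq0P v0.
  by apply/eqP/matrixP => i k; rewrite (ord1 i) mxE; apply/normr0_eq0/v0.
have vGk k : `|a| * `|v 0 k| = `|(v *m G) 0 k| by rewrite vG mxE normrM.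
rewrite -(ler_pM2r l1_gt0) mulr_sumr (eq_bigr _ (fun k _ => vGk k)).
apply: (le_trans (y := \sum_(k < n) \sum_(l < n) `|v 0 l| * c)).
  apply: ler_sum => k _; rewrite mxE; apply: le_trans (ler_norm_sum _ _ _) _.
  by apply: ler_sum => l _; rewrite normrM ler_wpM2l.
by rewrite -mulr_suml sumr_const card_ord -/l1 mulrC -mulrnAl mulr_natl.
Qed.

Section SingularValues.
Variable R : realType.
Local Open Scope complex_scope.

Lemma norm_adjmx_mul_le n (M : 'M[R[i]]_n) b :
  (forall i j, `|M i j| <= b%:C) ->
  forall i j, `|(adjmx M *m M) i j| <= n%:R * b%:C ^+ 2.
Proof.
move=> Mb i j; rewrite mxE; apply: le_trans (ler_norm_sum _ _ _) _.
rewrite mulr_natl -[n in _ *+ n]card_ord -sumr_const; apply: ler_sum => k _.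
by rewrite !mxE normrM normcJ expr2 ler_pM.
Qed.

Lemma sigma_max_le n (M : 'M[R[i]]_n) b :
  0 <= b -> (forall i j, `|M i j| <= b%:C) -> sigma_max M <= n%:R * b.
Proof.
move=> b_ge0 Mb; rewrite /sigma_max -[n%:R * b]ger0_norm ?mulr_ge0 //.
rewrite -sqrtr_sqr ler_wsqrtr //.
have [->|ne] := eqVneq [set x : R | eigenvalue (adjmx M *m M) x%:C]%classic set0.
  by rewrite sup0 sqr_ge0.
apply: ge_sup; first exact/set0P.
move=> x /= /(eigenvalue_norm_le (norm_adjmx_mul_le Mb)).
rewrite mulrA -expr2 -exprMn -lecR rmorphXn rmorphM /= rmorph_nat.
by apply: le_trans; rewrite real_ler_norm ?complex_real.
Qed.

End SingularValues.

Section RootOfUnity.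
Variable R : realType.
Local Open Scope complex_scope.

Lemma omegaX q k :
  omega R q ^+ k = cos ((2 * pi / q%:R) *+ k) +i* sin ((2 * pi / q%:R) *+ k).
Proof.
elim: k => [|k IH]; first by rewrite expr0 !mulr0n cos0 sin0.
rewrite exprSr IH /omega; set t := 2 * pi / q%:R.
rewrite [t *+ k.+1]mulrSr cosD sinD; simpc.
by congr (_ +i* _); rewrite addrC.
Qed.

Lemma omega_expr_order q : (0 < q)%N -> omega R q ^+ q = 1.
Proof.
move=> q_gt0; rewrite omegaX -mulr_natr divfK ?pnatr_eq0 -?lt0n //.
by rewrite mulr_natl cos2pi sin2pi.
Qed.

End RootOfUnity.

Lemma cond_number_vandermonde_le (R : realType) q m (s : 'I_m -> R[i]) :
  (0 < q)%N -> (m <= q)%N -> injective s -> (forall k, s k ^+ q = 1) ->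
  (cond_number (vandermonde s) <= (2 * q%:R ^+ (q - m).+2)%:E)%E.
Proof.
move=> q_gt0 le_mq s_inj s_unity.
have WV : vandermonde_inv s *m vandermonde s = 1%:M := mul_vandermonde_inv s_inj.
have [_ V_unit] := mulmx1_unit WV.
have invV : invmx (vandermonde s) = vandermonde_inv s.
  by rewrite -[LHS]mul1mx -WV -mulmxA mulmxV ?mulmx1.
rewrite /cond_number V_unit invV lee_fin.
have sV : sigma_max (vandermonde s) <= m%:R * 1.
  apply: sigma_max_le => // i j.
  by rewrite mxE normrX (norm_unity_root (s_unity j) q_gt0) expr1n.
have sW : sigma_max (vandermonde_inv s) <= m%:R * (2 * q%:R ^+ (q - m)).
  apply: sigma_max_le => [|j i]; first by rewrite mulr_ge0 ?exprn_ge0.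
  by rewrite rmorphM rmorphXn /= !rmorph_nat norm_vandermonde_inv_le.
apply: le_trans (ler_pM (sqrtr_ge0 _) (sqrtr_ge0 _) sV sW) _.
have -> : 2 * q%:R ^+ (q - m).+2 = q%:R * (q%:R * (2 * q%:R ^+ (q - m))) :> R.
  by rewrite !exprS; ring.
rewrite mulr1; apply: ler_pM; rewrite ?mulr_ge0 ?exprn_ge0 ?ler_nat //.
by apply: ler_wpM2r; rewrite ?mulr_ge0 ?exprn_ge0 ?ler_nat.
Qed.

Theorem theorem1 (R : realType) :
  exists C : R, forall (q m : nat) (s : 'I_m -> R[i]),
    odd q -> (0 < m)%N -> (m < q)%N ->
    injective s ->
    (forall j, exists2 k : nat, (k < q)%N & s j = omega R q ^+ k) ->
    (cond_number (vandermonde s) <=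
       (C * powR (q%:R : R) (q%:R - m%:R + 11 / 2))%:E)%E.
Proof.
exists 2 => q m s _ _ lt_mq s_inj s_omega.
have q_gt0 : (0 < q)%N := leq_ltn_trans (leq0n m) lt_mq.
have s_unity k : s k ^+ q = 1.
  by have [e _ ->] := s_omega k; rewrite -exprM mulnC exprM omega_expr_order ?expr1n.
apply: le_trans (cond_number_vandermonde_le q_gt0 (ltnW lt_mq) s_inj s_unity) _.
rewrite lee_fin ler_wpM2l // -powR_mulrn ?ler0n // ler_powR ?ler1n //.
rewrite -addn2 natrD natrB ?(ltnW lt_mq) // lerD2l; lra.
Qed.
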